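(* Let $R$ be a commutative ring, $M$ a faithful primeful $R$-module having at least one prime submodule, $X=\mathrm{Spec}(M)$, and $N$ an $R$-module. For every $f\in R$, the module $\mathcal{A}(N,M)(X_f)$ is isomorphic to the localization $N_f$.
   Context: For a submodule $L$ of an $R$-module $M$, $(L:M)=\{r\in R\mid rM\subseteq L\}$. A submodule $P$ of $M$ is prime if $P\neq M$ and whenever $rm\in P$ ($r\in R$, $m\in M$) then $r\in (P:M)$ or $m\in P$. $\mathrm{Spec}(M)$ is the set of prime submodules. $M$ is faithful if $\mathrm{Ann}_R(M)=0$; primeful if $M=0$ or $\mathrm{Spec}(M)\to\mathrm{Spec}(R/\mathrm{Ann}(M))$, $P\mapsto(P:M)/\mathrm{Ann}(M)$, is surjective. For $L\le M$, $V(L)=\{P\in X\mid (P:M)\supseteq (L:M)\}$; these are the closed sets of the Zariski topology. For $r\in R$, $X_r=X\setminus V(rM)$. For open $U\subseteq X$, $\mathrm{Supp}(U)=\{(P:M)\mid P\in U\}$. $\mathcal{A}(N,M)(U)$ is the $R$-module of families $(\gamma_{\mathfrak p})_{\mathfrak p\in\mathrm{Supp}(U)}\in\prod_{\mathfrak p\in\mathrm{Supp}(U)}N_{\mathfrak p}$ such that for each $Q\in U$ there exist an open neighbourhood $W\subseteq U$ of $Q$ and $s\in R$, $m\in N$ with $s\notin(P:M)$ and $\gamma_{(P:M)}=m/s$ for every $P\in W$. $N_f$ is the localization of $N$ at $\{f^n\mid n\ge0\}$. *)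

(* Modules over a commutative ring R are MathComp lmodType R
   (R : comPzRingType, so the zero ring is not excluded a priori).
   Localizations and the module of sections A(N,M)(U) are presented as
   "setoid modules": a carrier of representatives, a validity predicate,
   an equivalence relation (the quotient is the actual module) and the
   module operations on representatives. *)
From mathcomp Require Import all_boot all_algebra.
Set Implicit Arguments. Unset Strict Implicit. Unset Printing Implicit Defensive.
Import GRing.Theory.
Local Open Scope ring_scope.

Definition is_submodule (R : pzRingType) (M : lmodType R) (L : M -> Prop) : Prop :=
  L 0 /\ (forall x y, L x -> L y -> L (x + y)) /\ (forall (r : R) x, L x -> L (r *: x)).

Definition colon (R : pzRingType) (M : lmodType R) (L : M -> Prop) : R -> Prop :=
  fun r => forall m : M, L (r *: m).

Definition prime_submodule (R : pzRingType) (M : lmodType R) (P : M -> Prop) : Prop :=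
  is_submodule P /\ (exists m, ~ P m) /\
  (forall (r : R) (m : M), P (r *: m) -> colon P r \/ P m).

Definition Ann (R : pzRingType) (M : lmodType R) : R -> Prop :=
  fun r => forall m : M, r *: m = 0.

Definition faithful (R : pzRingType) (M : lmodType R) : Prop :=
  forall r : R, Ann M r -> r = 0.

Definition is_ideal (R : pzRingType) (I : R -> Prop) : Prop :=
  I 0 /\ (forall x y, I x -> I y -> I (x + y)) /\
  (forall a x, I x -> I (a * x)) /\ (forall a x, I x -> I (x * a)).

Definition prime_ideal (R : pzRingType) (p : R -> Prop) : Prop :=
  is_ideal p /\ ~ p 1 /\ (forall a b, p (a * b) -> p a \/ p b).

(* primeful: M = 0, or P |-> (P:M)/Ann(M) is onto Spec(R/Ann(M)).  Prime
   ideals of R/Ann(M) are identified (correspondence theorem) with prime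
   ideals p of R containing Ann(M); (P:M)/Ann(M) = p/Ann(M) iff (P:M) = p. *)
Definition primeful (R : pzRingType) (M : lmodType R) : Prop :=
  (forall m : M, m = 0) \/
  (forall p : R -> Prop, prime_ideal p -> (forall r, Ann M r -> p r) ->
     exists P : M -> Prop, prime_submodule P /\ (forall r, colon P r <-> p r)).

Definition V (R : pzRingType) (M : lmodType R) (L : M -> Prop) : (M -> Prop) -> Prop :=
  fun P => prime_submodule P /\ (forall r, colon L r -> colon P r).

Definition zopen (R : pzRingType) (M : lmodType R) (U : (M -> Prop) -> Prop) : Prop :=
  (forall P, U P -> prime_submodule P) /\
  exists L : M -> Prop, is_submodule L /\
    (forall P, prime_submodule P -> (U P <-> ~ V L P)).

Definition scaled_module (R : pzRingType) (M : lmodType R) (r : R) : M -> Prop :=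
  fun x => exists m : M, x = r *: m.

Definition Xbasic (R : pzRingType) (M : lmodType R) (r : R) : (M -> Prop) -> Prop :=
  fun P => prime_submodule P /\ ~ V (@scaled_module R M r) P.

Definition Supp (R : pzRingType) (M : lmodType R) (U : (M -> Prop) -> Prop)
  : (R -> Prop) -> Prop :=
  fun p => exists P, U P /\ p = colon P.

Record smod (R : pzRingType) := SMod {
  scarrier : Type;
  svalid : scarrier -> Prop;
  seqv : scarrier -> scarrier -> Prop;
  szero : scarrier;
  sadd : scarrier -> scarrier -> scarrier;
  sscale : R -> scarrier -> scarrier
}.

Definition smod_iso (R : pzRingType) (A B : smod R) : Prop :=
  exists phi : scarrier A -> scarrier B,
    (forall x, svalid x -> svalid (phi x)) /\
    (forall x y, svalid x -> svalid y -> seqv x y -> seqv (phi x) (phi y)) /\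
    (forall x y, svalid x -> svalid y ->
        seqv (phi (sadd x y)) (sadd (phi x) (phi y))) /\
    (forall (r : R) x, svalid x -> seqv (phi (sscale r x)) (sscale r (phi x))) /\
    (forall x y, svalid x -> svalid y -> seqv (phi x) (phi y) -> seqv x y) /\
    (forall z, svalid z -> exists x, svalid x /\ seqv (phi x) z).

Definition loc_eq (R : comPzRingType) (N : lmodType R) (S : R -> Prop)
  (x y : N * R) : Prop :=
  exists t, S t /\ t *: (y.2 *: x.1 - x.2 *: y.1) = 0.

Definition loc_add (R : comPzRingType) (N : lmodType R) (x y : N * R) : N * R :=
  (y.2 *: x.1 + x.2 *: y.1, x.2 * y.2).

Definition loc_scale (R : comPzRingType) (N : lmodType R) (r : R) (x : N * R) : N * R :=
  (r *: x.1, x.2).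

Definition loc_mod (R : comPzRingType) (N : lmodType R) (S : R -> Prop) : smod R :=
  @SMod R (N * R) (fun x => S x.2) (loc_eq S) (0, 1)
        (@loc_add R N) (@loc_scale R N).

Definition powers (R : pzRingType) (f : R) : R -> Prop := fun s => exists n, s = f ^+ n.
Definition compl (R : pzRingType) (p : R -> Prop) : R -> Prop := fun s => ~ p s.

Definition Nf (R : comPzRingType) (N : lmodType R) (f : R) : smod R :=
  loc_mod N (powers f).

(* a family gamma = (gamma_p)_{p in Supp U}, gamma_p in N_p given by a
   representative, satisfying the local-fraction condition *)
Definition is_section (R : comPzRingType) (M N : lmodType R)
  (U : (M -> Prop) -> Prop) (gamma : (R -> Prop) -> N * R) : Prop :=
  (forall p, Supp U p -> ~ p (gamma p).2) /\
  (forall Q, U Q -> exists W : (M -> Prop) -> Prop,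
      zopen W /\ W Q /\ (forall P, W P -> U P) /\
      exists (s : R) (m : N), forall P, W P ->
        ~ colon P s /\ loc_eq (compl (colon P)) (gamma (colon P)) (m, s)).

Definition sections_mod (R : comPzRingType) (M N : lmodType R)
  (U : (M -> Prop) -> Prop) : smod R :=
  @SMod R ((R -> Prop) -> N * R)
    (is_section U)
    (fun g g' => forall p, Supp U p -> loc_eq (compl p) (g p) (g' p))
    (fun _ => (0, 1))
    (fun g g' p => loc_add (g p) (g' p))
    (fun r g p => loc_scale r (g p)).

(* Since M is faithful, primeful and has a prime submodule, P |-> (P:M) maps
   X_f onto the primes of R avoiding f, so a section over X_f is a family of
   fractions gamma_q (f \notin q) that is locally of the form a/g on the basic
   opens D(g) = {q | g \notin q}.  As for the structure sheaf of Spec R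
   (Hartshorne II.2.2), quasi-compactness of D(f) yields finitely many local
   representations a_i/g_i with f^e in the ideal (g_i); raising the g_i to a
   common power makes the a_i/g_i agree on the nose, and a partition
   f^e = sum r_i g_i glues them into the single fraction (sum r_i a_i)/f^e.
   Sending a section to this fraction is the isomorphism: it is well defined
   and injective because an element of N vanishing in N_q for every prime q
   avoiding f is killed by a power of f.  Both finiteness arguments rest on
   the existence (Zorn) of a prime ideal containing a given ideal and
   avoiding the powers of f. *)

From mathcomp Require Import all_boot all_algebra.
From mathcomp Require Import boolp classical_sets.
From mathcomp Require Import ring.
Set Implicit Arguments. Unset Strict Implicit. Unset Printing Implicit Defensive.
Import GRing.Theory.
Local Open Scope ring_scope.

(* A module identity in (at most) four vectors u, v, w, z is the image of a
   ring identity in R^4 under (a, b, c, d) |-> a u + b v + c w + d z. *)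
Lemma lin_comb_ind (R : comPzRingType) (N : lmodType R) (u v w z : N)
    (P : N -> N -> N -> N -> Prop) :
  (forall L : R -> R -> R -> R -> N,
     (forall a b c d a' b' c' d',
        L a b c d + L a' b' c' d' = L (a + a') (b + b') (c + c') (d + d')) ->
     (forall a b c d, - L a b c d = L (- a) (- b) (- c) (- d)) ->
     (forall r a b c d, r *: L a b c d = L (r * a) (r * b) (r * c) (r * d)) ->
     L 0 0 0 0 = 0 ->
     P (L 1 0 0 0) (L 0 1 0 0) (L 0 0 1 0) (L 0 0 0 1)) ->
  P u v w z.
Proof.
pose L a b c d := (a *: u + b *: v) + (c *: w + d *: z) => /(_ L).
have LD a b c d a' b' c' d' :
    L a b c d + L a' b' c' d' = L (a + a') (b + b') (c + c') (d + d').
  by rewrite /L addrACA [X in X + _]addrACA [X in _ + X]addrACA !scalerDl.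
have LN a b c d : - L a b c d = L (- a) (- b) (- c) (- d).
  by rewrite /L !opprD !scaleNr.
have LZ r a b c d : r *: L a b c d = L (r * a) (r * b) (r * c) (r * d).
  by rewrite /L !scalerDr !scalerA.
have L0 : L 0 0 0 0 = 0 by rewrite /L !scale0r !addr0.
by move=> /(_ LD LN LZ L0); rewrite /L !scale0r !scale1r ?addr0 ?add0r.
Qed.

Ltac lmod_ring u v w z :=
  pattern u, v, w, z; apply: lin_comb_ind;
  let L := fresh "L" in let LD := fresh "LD" in let LN := fresh "LN" in
  let LZ := fresh "LZ" in let L0 := fresh "L0" in
  intros L LD LN LZ L0;
  rewrite -?L0; repeat progress rewrite ?LN ?LZ ?LD; congr L; ring.

Lemma ideal_nmull (R : pzRingType) (I : R -> Prop) a b : is_ideal I -> ~ I (a * b) -> ~ I a.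
Proof. by move=> [_ [_ [_ IM]]] Iab Ia; apply: Iab; exact: IM. Qed.

Lemma ideal_nmulr (R : pzRingType) (I : R -> Prop) a b : is_ideal I -> ~ I (a * b) -> ~ I b.
Proof. by move=> [_ [_ [IM _]]] Iab Ib; apply: Iab; exact: IM. Qed.

Section PrimeAvoidance.
Variable R : comPzRingType.
Implicit Types (I J p : R -> Prop) (e : R).

Definition avoids_powers I e := forall k, ~ I (e ^+ k).

Definition avoiding_ideal I e J :=
  is_ideal J /\ (forall x, I x -> J x) /\ avoids_powers J e.

Lemma avoiding_ideal_chain I e (F : set (set R)) X0 :
  F X0 -> avoiding_ideal I e X0 ->
  (forall X, F X -> X = set0 \/ avoiding_ideal I e X) -> total_on F subset ->
  avoiding_ideal I e (\bigcup_(X in F) X)%classic.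
Proof.
move=> FX0 [[X0_0 _] [IX0 _]] FP Ftot.
have XP X x : F X -> X x -> avoiding_ideal I e X.
  by move=> FX Xx; case: (FP X FX) => // Xempty; rewrite Xempty in Xx.
split; [split; [|split; [|split]] | split].
- by exists X0.
- move=> x y [X FX Xx] [Y FY Yy].
  have [XY|YX] := Ftot X Y FX FY.
  + have [[_ [XD _]] _] := XP Y y FY Yy; exists Y => //; exact: XD (XY _ Xx) Yy.
  + have [[_ [XD _]] _] := XP X x FX Xx; exists X => //; exact: XD Xx (YX _ Yy).
- move=> a x [X FX Xx]; have [[_ [_ [XM _]]] _] := XP X x FX Xx.
  by exists X => //; exact: XM.
- move=> a x [X FX Xx]; have [[_ [_ [_ XM]]] _] := XP X x FX Xx.
  by exists X => //; exact: XM.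
- by move=> x Ix; exists X0 => //; exact: IX0.
- by move=> k [X FX Xk]; have [_ [_ Xe]] := XP X _ FX Xk; exact: Xe Xk.
Qed.

Lemma ideal_adjoin J c : is_ideal J ->
  is_ideal (fun x => exists y r, J y /\ x = y + r * c).
Proof.
move=> [J0 [JD [JM JM']]]; split; first by exists 0, 0; rewrite mul0r addr0.
split; [|split].
- move=> _ _ [y [r [Jy ->]]] [y' [r' [Jy' ->]]].
  by exists (y + y'), (r + r'); split; [exact: JD | ring].
- move=> a _ [y [r [Jy ->]]].
  by exists (a * y), (a * r); split; [exact: JM | ring].
- move=> a _ [y [r [Jy ->]]].
  by exists (y * a), (r * a); split; [exact: JM' | ring].
Qed.

Lemma maximal_avoiding_ideal_prime I e A :
  avoiding_ideal I e A ->
  (forall B, (A `<` B)%classic -> ~ avoiding_ideal I e B) -> prime_ideal A.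
Proof.
move=> [hA [IA Ae]] Amax; split => //.
split; first by move=> A1; apply: (Ae 0%N); rewrite expr0.
have adjoin c : ~ A c -> exists k y r, A y /\ e ^+ k = y + r * c.
  move=> Ac; apply: contrapT => hn.
  apply: (Amax (fun x => exists y r, A y /\ x = y + r * c)).
    split; first by move=> x Ax; exists x, 0; rewrite mul0r addr0.
    move=> BA; apply: Ac; apply: BA; exists 0, 1.
    by case: hA => A0 _; rewrite mul1r add0r.
  split; first exact: ideal_adjoin.
  split; first by move=> x /IA Ax; exists x, 0; rewrite mul0r addr0.
  by move=> k Bk; apply: hn; exists k.
move=> a b Aab; apply: contrapT => /not_orP [Aa Ab].
have [k [y [r [Ay ek]]]] := adjoin a Aa; have [l [y' [r' [Ay' el]]]] := adjoin b Ab.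
case: hA => [_ [AD [AM AM']]]; apply: (Ae (k + l)%N); rewrite exprD ek el.
have -> : (y + r * a) * (y' + r' * b) = y * (y' + r' * b) + (r * a * y' + r * r' * (a * b)).
  by ring.
by apply: (AD); [exact: AM' | apply: AD; exact: AM].
Qed.

Lemma prime_ideal_avoiding_powers I e : is_ideal I -> avoids_powers I e ->
  exists p, prime_ideal p /\ (forall x, I x -> p x) /\ avoids_powers p e.
Proof.
move=> hI Ie; have hII : avoiding_ideal I e I by [].
have [A [[A0|hA] Amax]] :
    exists A, (A = set0 \/ avoiding_ideal I e A) /\
      forall B, (A `<` B)%classic -> ~ (B = set0 \/ avoiding_ideal I e B).
- apply: Zorn_bigcup => F FP Ftot.
  have [[X0 [FX0 [x0 X0x0]]] | Fempty] := pselect (exists X, F X /\ (X !=set0)%classic).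
    have [X00 | hX0] := FP X0 FX0; first by rewrite X00 in X0x0.
    by right; apply: avoiding_ideal_chain FX0 hX0 FP Ftot.
  left; apply/seteqP; split => // x [X FX Xx].
  by apply: Fempty; exists X; split => //; exists x.
- exfalso; apply: (Amax I); last by right.
  rewrite A0; split => // /(_ 0); apply; by case: hI.
- exists A; split; last by case: hA => _ [].
  by apply: maximal_avoiding_ideal_prime hA _ => B AB hB; apply: (Amax B AB); right.
Qed.

Lemma prime_ideal_nmul p a b : prime_ideal p -> ~ p a -> ~ p b -> ~ p (a * b).
Proof. by move=> [_ [_ hp]] na nb /hp []. Qed.

Lemma prime_ideal_nexp p a k : prime_ideal p -> ~ p a -> ~ p (a ^+ k).
Proof.
move=> hp na; elim: k => [|k IH]; first by rewrite expr0; case: hp => _ [].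
by rewrite exprS; apply: prime_ideal_nmul.
Qed.

Lemma exists_pow_in_ideal I e : is_ideal I ->
  (forall p, prime_ideal p -> ~ p e -> exists2 x, I x & ~ p x) -> exists k, I (e ^+ k).
Proof.
move=> hI cover; apply: contrapT => Ie.
have [p [hp [Ip pe]]] := prime_ideal_avoiding_powers hI (fun k Iek => Ie (ex_intro _ k Iek)).
have [|x /Ip px] := cover p hp; last by [].
by move=> pe1; apply: (pe 1%N); rewrite expr1.
Qed.

End PrimeAvoidance.

Section Localization.
Variables (R : comPzRingType) (N : lmodType R).
Implicit Types (S p : R -> Prop) (x y z : N * R).

Definition mul_closed S := S 1 /\ forall a b, S a -> S b -> S (a * b).

Lemma mul_closed_compl p : prime_ideal p -> mul_closed (compl p).
Proof. by move=> hp; split=> [|a b]; [case: hp => _ [] | exact: prime_ideal_nmul]. Qed.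

Lemma mul_closed_powers f : mul_closed (powers f).
Proof.
split; first by exists 0%N; rewrite expr0.
by move=> _ _ [k ->] [l ->]; exists (k + l)%N; rewrite exprD.
Qed.

Lemma powers_sub_compl p f : prime_ideal p -> ~ p f -> forall s, powers f s -> compl p s.
Proof. by move=> hp pf _ [k ->]; exact: prime_ideal_nexp. Qed.

Lemma loc_eq_sub S S' x y : (forall s, S s -> S' s) -> loc_eq S x y -> loc_eq S' x y.
Proof. by move=> SS' [t [St e]]; exists t; split => //; exact: SS'. Qed.

Lemma loc_eq_refl S x : S 1 -> loc_eq S x x.
Proof. by move=> S1; exists 1; split => //; rewrite subrr scaler0. Qed.

Lemma loc_eq_expand S x s : S 1 -> loc_eq S x (s *: x.1, s * x.2).
Proof. by move=> S1; exists 1; split=> //=; lmod_ring x.1 x.1 x.1 x.1. Qed.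

Lemma loc_eq_sym S x y : loc_eq S x y -> loc_eq S y x.
Proof.
case=> t [St e]; exists t; split => //.
have -> : t *: (x.2 *: y.1 - y.2 *: x.1) = - (t *: (y.2 *: x.1 - x.2 *: y.1)).
  by lmod_ring x.1 y.1 x.1 x.1.
by rewrite e oppr0.
Qed.

Lemma loc_eq_trans S x y z : mul_closed S -> S y.2 ->
  loc_eq S x y -> loc_eq S y z -> loc_eq S x z.
Proof.
move=> [_ SM] Sy [t1 [St1 e1]] [t2 [St2 e2]]; exists (t1 * t2 * y.2).
split; first by apply: (SM) => //; exact: SM.
have -> : (t1 * t2 * y.2) *: (z.2 *: x.1 - x.2 *: z.1) =
    (t2 * z.2) *: (t1 *: (y.2 *: x.1 - x.2 *: y.1)) +
    (t1 * x.2) *: (t2 *: (z.2 *: y.1 - y.2 *: z.1)).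
  by lmod_ring x.1 y.1 z.1 x.1.
by rewrite e1 e2 !scaler0 addr0.
Qed.

Lemma loc_add_eq S x x' y y' : mul_closed S ->
  loc_eq S x x' -> loc_eq S y y' -> loc_eq S (loc_add x y) (loc_add x' y').
Proof.
move=> [_ SM] [t1 [St1 e1]] [t2 [St2 e2]]; exists (t1 * t2); split; first exact: SM.
have -> : (t1 * t2) *: ((x'.2 * y'.2) *: (y.2 *: x.1 + x.2 *: y.1) -
                        (x.2 * y.2) *: (y'.2 *: x'.1 + x'.2 *: y'.1)) =
    (t2 * y.2 * y'.2) *: (t1 *: (x'.2 *: x.1 - x.2 *: x'.1)) +
    (t1 * x.2 * x'.2) *: (t2 *: (y'.2 *: y.1 - y.2 *: y'.1)).
  by lmod_ring x.1 x'.1 y.1 y'.1.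
by rewrite e1 e2 !scaler0 addr0.
Qed.

Lemma loc_scale_eq S r x x' : loc_eq S x x' -> loc_eq S (loc_scale r x) (loc_scale r x').
Proof.
move=> [t [St e]]; exists t; split => //=.
have -> : t *: (x'.2 *: (r *: x.1) - x.2 *: (r *: x'.1)) =
    r *: (t *: (x'.2 *: x.1 - x.2 *: x'.1)).
  by lmod_ring x.1 x'.1 x.1 x.1.
by rewrite e scaler0.
Qed.

Lemma annihilator_ideal (v : N) : is_ideal (fun r : R => r *: v = 0).
Proof.
split; first by rewrite scale0r.
split; first by move=> a b ea eb; rewrite scalerDl ea eb addr0.
split; first by move=> a b eb; rewrite -scalerA eb scaler0.
by move=> a b eb; rewrite mulrC -scalerA eb scaler0.
Qed.

Lemma pow_scale_eq0_of_local e (v : N) :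
  (forall p, prime_ideal p -> ~ p e -> exists2 t, t *: v = 0 & ~ p t) ->
  exists k, e ^+ k *: v = 0.
Proof. exact: exists_pow_in_ideal (annihilator_ideal v). Qed.

Lemma loc_eq_powers_of_local f x y :
  (forall p, prime_ideal p -> ~ p f -> loc_eq (compl p) x y) -> loc_eq (powers f) x y.
Proof.
move=> local; have [|k ek] := @pow_scale_eq0_of_local f (y.2 *: x.1 - x.2 *: y.1).
  by move=> p hp pf; have [t [pt et]] := local p hp pf; exists t.
by exists (f ^+ k); split => //; exists k.
Qed.

End Localization.

Section IdealSpan.
Variables (R : comPzRingType) (T : eqType) (A : T -> Prop) (g : T -> R).

Definition ideal_span (x : R) := exists c : seq (R * T),
  (forall u, u \in c -> A u.2) /\ x = \sum_(u <- c) u.1 * g u.2.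

Lemma ideal_span_ideal : is_ideal ideal_span.
Proof.
split; first by exists [::]; rewrite big_nil.
split.
  move=> _ _ [c [cA ->]] [c' [c'A ->]]; exists (c ++ c'); rewrite big_cat.
  by split=> // u; rewrite mem_cat => /orP [/cA | /c'A].
have scale a c : (forall u, u \in c -> A u.2) ->
    exists2 c', (forall u, u \in c' -> A u.2) & \sum_(u <- c') u.1 * g u.2 =
                a * \sum_(u <- c) u.1 * g u.2.
  move=> cA; exists [seq (a * u.1, u.2) | u <- c]; first by move=> _ /mapP [u /cA uA ->].
  by rewrite big_map mulr_sumr; apply: eq_bigr => u _; rewrite mulrA.
split=> a _ [c [cA ->]]; have [c' c'A e] := scale a c cA; exists c'.
  by split=> //; rewrite e.
by split=> //; rewrite e mulrC.
Qed.

Lemma ideal_span_mem t : A t -> ideal_span (g t).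
Proof.
move=> At; exists [:: (1, t)]; rewrite big_seq1 mul1r.
by split=> // u; rewrite inE => /eqP ->.
Qed.

Lemma ideal_span_nmem (p : R -> Prop) x : is_ideal p -> ideal_span x -> ~ p x ->
  exists2 t, A t & ~ p (g t).
Proof.
move=> [p0 [pD [pM _]]] [c [cA ->]]; apply: contra_notP => pg.
elim: c cA => [|u c IH] cA; first by rewrite big_nil.
rewrite big_cons; apply: pD; last by apply: IH => v vc; apply: cA; rewrite inE vc orbT.
by apply: pM; apply: contrapT => pu; apply: pg; exists u.2 => //; apply: cA; rewrite mem_head.
Qed.

End IdealSpan.

Lemma eventually_all_seq (T : eqType) (s : seq T) (Q : nat -> T -> Prop) :
  (forall k k' x, (k <= k')%N -> Q k x -> Q k' x) ->
  (forall x, x \in s -> exists k, Q k x) -> exists k, forall x, x \in s -> Q k x.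
Proof.
move=> mono; elim: s => [|a s IH] sQ; first by exists 0%N.
have [k0 Qa] := sQ a (mem_head a s).
have [|k Qs] := IH; first by move=> x xs; apply: sQ; rewrite inE xs orbT.
exists (maxn k0 k) => x; rewrite inE => /orP [/eqP -> | xs].
  by apply: mono Qa; apply: leq_maxl.
by apply: mono (Qs x xs); apply: leq_maxr.
Qed.

Section Fractions.
Variables (R : comPzRingType) (N : lmodType R) (f : R).
Implicit Types (q : R -> Prop) (t z : N * R) (gamma : (R -> Prop) -> N * R).

Definition fraction_family gamma := forall q, prime_ideal q -> ~ q f -> ~ q (gamma q).2.

Definition local_fraction gamma t := forall q, prime_ideal q -> ~ q t.2 ->
  ~ q f /\ loc_eq (compl q) (gamma q) t.

Definition global_fraction gamma z := powers f z.2 /\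
  forall q, prime_ideal q -> ~ q f -> loc_eq (compl q) (gamma q) z.

Definition compatible t t' := t'.2 *: t.1 = t.2 *: t'.1.

Lemma local_fraction_expand gamma t s :
  local_fraction gamma t -> local_fraction gamma (s *: t.1, s * t.2).
Proof.
move=> lt q hq /= qst; have qt := ideal_nmulr (proj1 hq) qst.
have [qf eq_t] := lt q hq qt; split => //.
apply: loc_eq_trans (mul_closed_compl hq) qt eq_t _.
by apply: loc_eq_expand; case: (mul_closed_compl hq).
Qed.

Lemma compatible_expand t t' k :
  (t.2 * t'.2) ^+ k *: (t'.2 *: t.1 - t.2 *: t'.1) = 0 ->
  compatible (t.2 ^+ k *: t.1, t.2 ^+ k * t.2) (t'.2 ^+ k *: t'.1, t'.2 ^+ k * t'.2).
Proof.
move=> e; apply/eqP; rewrite -subr_eq0 -e exprMn /=; apply/eqP.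
by lmod_ring t.1 t'.1 t.1 t.1.
Qed.

Section Glueing.
Variable gamma : (R -> Prop) -> N * R.
Hypothesis gamma_den : fraction_family gamma.
Hypothesis gamma_local : forall q, prime_ideal q -> ~ q f ->
  exists2 t, local_fraction gamma t & ~ q t.2.

Lemma local_fractions_agree t t' : local_fraction gamma t -> local_fraction gamma t' ->
  exists k, (t.2 * t'.2) ^+ k *: (t'.2 *: t.1 - t.2 *: t'.1) = 0.
Proof.
move=> lt lt'; apply: pow_scale_eq0_of_local => q hq qtt'.
have [qf eq_t] := lt q hq (ideal_nmull (proj1 hq) qtt').
have [_ eq_t'] := lt' q hq (ideal_nmulr (proj1 hq) qtt').
have [s [qs es]] := loc_eq_trans (mul_closed_compl hq) (gamma_den hq qf)
  (loc_eq_sym eq_t) eq_t'.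
by exists s.
Qed.

Lemma local_cover : exists (l : seq (N * R)) e, (forall t, t \in l -> local_fraction gamma t) /\
  ideal_span (fun t => t \in l) snd (f ^+ e).
Proof.
have [|e [c [cl fe]]] := exists_pow_in_ideal (ideal_span_ideal (local_fraction gamma) snd) (e := f).
  move=> q hq qf; have [t lt qt] := gamma_local hq qf.
  by exists t.2 => //; exact: ideal_span_mem.
exists [seq u.2 | u <- c], e; split; first by move=> _ /mapP [u uc ->]; exact: cl.
by exists c; split=> // u uc; exact: map_f.
Qed.

Lemma compatible_local_cover : exists (l : seq (N * R)) e,
  [/\ forall t, t \in l -> local_fraction gamma t,
      forall t t', t \in l -> t' \in l -> compatible t t' &
      ideal_span (fun t => t \in l) snd (f ^+ e)].
Proof.
have [l [e [ll fe]]] := local_cover.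
have [k agree] : exists k, forall tt, tt \in [seq (t, t') | t <- l, t' <- l] ->
    (tt.1.2 * tt.2.2) ^+ k *: (tt.2.2 *: tt.1.1 - tt.1.2 *: tt.2.1) = 0.
  apply: eventually_all_seq.
    by move=> k k' tt /subnK <- e0; rewrite exprD -scalerA e0 scaler0.
  move=> _ /allpairsP [[t t'] [tl t'l ->]].
  exact: local_fractions_agree (ll t tl) (ll t' t'l).
pose expand t := (t.2 ^+ k *: t.1, t.2 ^+ k * t.2).
have [|e' fe'] := exists_pow_in_ideal
    (ideal_span_ideal (fun t => t \in [seq expand t | t <- l]) snd) (e := f).
  move=> q hq qf; have [t tl qt] := ideal_span_nmem (proj1 hq) fe (prime_ideal_nexp (k := e) hq qf).
  exists (expand t).2; first by apply: ideal_span_mem; exact: map_f.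
  by apply: prime_ideal_nmul => //; exact: prime_ideal_nexp.
exists [seq expand t | t <- l], e'; split=> //.
- by move=> _ /mapP [t tl ->]; exact: local_fraction_expand (ll t tl).
- move=> _ _ /mapP [t tl ->] /mapP [t' t'l ->]; apply: compatible_expand.
  exact: (agree (t, t')) (allpairs_f pair tl t'l).
Qed.

Lemma glue_compatible_cover (l : seq (N * R)) e :
  (forall t, t \in l -> local_fraction gamma t) ->
  (forall t t', t \in l -> t' \in l -> compatible t t') ->
  ideal_span (fun t => t \in l) snd (f ^+ e) -> exists z, global_fraction gamma z.
Proof.
move=> ll lc fe; have [c [cl fe_sum]] := fe.
exists (\sum_(u <- c) u.1 *: u.2.1, f ^+ e); split; first by exists e.
move=> q hq qf; have [t tl qt] := ideal_span_nmem (proj1 hq) fe (prime_ideal_nexp (k := e) hq qf).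
have [_ eq_t] := ll t tl q hq qt.
apply: loc_eq_trans (mul_closed_compl hq) qt eq_t _.
exists 1; split; first by case: (mul_closed_compl hq).
rewrite /= scale1r fe_sum scaler_suml scaler_sumr -sumrB big1_seq // => u uc.
by rewrite -scalerA (lc t u.2 tl (cl u uc)) !scalerA mulrC subrr.
Qed.

Lemma exists_global_fraction : exists z, global_fraction gamma z.
Proof.
have [l [e [ll lc fe]]] := compatible_local_cover.
exact: glue_compatible_cover ll lc fe.
Qed.

End Glueing.

Lemma global_fraction_eqv gamma gamma' z : fraction_family gamma' ->
  (forall q, prime_ideal q -> ~ q f -> loc_eq (compl q) (gamma q) (gamma' q)) ->
  global_fraction gamma' z -> global_fraction gamma z.
Proof.
move=> den' eqv [fz gz]; split=> // q hq qf.
exact: loc_eq_trans (mul_closed_compl hq) (den' q hq qf) (eqv q hq qf) (gz q hq qf).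
Qed.

Lemma global_fraction_add gamma gamma' z z' :
  global_fraction gamma z -> global_fraction gamma' z' ->
  global_fraction (fun q => loc_add (gamma q) (gamma' q)) (loc_add z z').
Proof.
move=> [fz gz] [fz' gz']; split; first by case: (mul_closed_powers f) => _; apply.
by move=> q hq qf; apply: loc_add_eq (mul_closed_compl hq) (gz q hq qf) (gz' q hq qf).
Qed.

Lemma global_fraction_scale r gamma z : global_fraction gamma z ->
  global_fraction (fun q => loc_scale r (gamma q)) (loc_scale r z).
Proof. by move=> [fz gz]; split=> // q hq qf; apply: loc_scale_eq; exact: gz. Qed.

Lemma global_fraction_const z : powers f z.2 -> global_fraction (fun _ => z) z.
Proof. by move=> fz; split=> // q hq qf; apply: loc_eq_refl; case: (mul_closed_compl hq). Qed.

Lemma global_fraction_loc_eq gamma gamma' z z' :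
  global_fraction gamma z -> global_fraction gamma' z' -> loc_eq (powers f) z z' ->
  forall q, prime_ideal q -> ~ q f -> loc_eq (compl q) (gamma q) (gamma' q).
Proof.
move=> [fz gz] [fz' gz'] zz' q hq qf; have cq := mul_closed_compl hq.
have fq := powers_sub_compl hq qf.
apply: (loc_eq_trans cq (fq _ fz) (gz q hq qf)).
exact: loc_eq_trans cq (fq _ fz') (loc_eq_sub fq zz') (loc_eq_sym (gz' q hq qf)).
Qed.

Lemma global_fraction_unique gamma z z' : fraction_family gamma ->
  global_fraction gamma z -> global_fraction gamma z' -> loc_eq (powers f) z z'.
Proof.
move=> den [fz gz] [fz' gz']; apply: loc_eq_powers_of_local => q hq qf.
exact: loc_eq_trans (mul_closed_compl hq) (den q hq qf) (loc_eq_sym (gz q hq qf)) (gz' q hq qf).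
Qed.

Definition glue gamma : N * R :=
  if pselect (exists z, global_fraction gamma z) is left h then sval (cid h) else (0, 1).

Lemma glueP gamma z : global_fraction gamma z -> global_fraction gamma (glue gamma).
Proof.
move=> gz; rewrite /glue; case: pselect => [h | []]; last by exists z.
by case: (cid h).
Qed.

Lemma glue_eq gamma z : fraction_family gamma -> global_fraction gamma z ->
  loc_eq (powers f) (glue gamma) z.
Proof. by move=> den gz; apply: global_fraction_unique den (glueP gz) gz. Qed.

End Fractions.

Section Spectrum.
Variables (R : comPzRingType) (M : lmodType R).
Implicit Types (P Q : M -> Prop) (p : R -> Prop).

Lemma colon_prime_ideal P : prime_submodule P -> prime_ideal (colon P).
Proof.
move=> [[P0 [PD PZ]] [[m Pm] Pprime]].
split; [split; [|split; [|split]] | split].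
- by move=> x; rewrite scale0r.
- by move=> a b Pa Pb x; rewrite scalerDl; apply: PD.
- by move=> a x Px y; rewrite -scalerA; apply: PZ.
- by move=> a x Px y; rewrite mulrC -scalerA; apply: PZ.
- by move=> P1; apply: Pm; rewrite -[m]scale1r; apply: P1.
- move=> a b Pab; have [Pa | Pa] := pselect (colon P a); first by left.
  by right => y; case: (Pprime a (b *: y)); rewrite ?scalerA.
Qed.

Lemma Xbasic_colon f P : Xbasic f P <-> prime_submodule P /\ ~ colon P f.
Proof.
split=> [[hP nV] | [hP Pf]]; split=> //.
  by move=> Pf; apply: nV; split=> // r fMr m; have [m' ->] := fMr m; exact: Pf.
by move=> [_ VP]; apply: Pf; apply: VP => m; exists m.
Qed.

Lemma zopen_Xbasic f : zopen (@Xbasic R M f).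
Proof.
split; first by move=> P [].
exists (scaled_module f); split; last by move=> P hP; split=> [[] | ].
split; first by exists 0; rewrite scaler0.
split; first by move=> _ _ [m ->] [m' ->]; exists (m + m'); rewrite scalerDr.
by move=> r _ [m ->]; exists (r *: m); rewrite !scalerA mulrC.
Qed.

Lemma zopen_basic_nbhd W Q : zopen W -> W Q ->
  exists2 h, ~ colon Q h & forall P, prime_submodule P -> ~ colon P h -> W P.
Proof.
move=> [WX [L [_ WL]]] WQ; have nVQ := (WL Q (WX Q WQ)).1 WQ.
have [h Lh Qh] : exists2 h, colon L h & ~ colon Q h.
  apply: contrapT => hn; apply: nVQ; split; first exact: WX.
  by move=> r Lr; apply: contrapT => Qr; apply: hn; exists r.
by exists h => // P hP Ph; apply/(WL P hP) => -[_ VP]; exact: Ph (VP h Lh).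
Qed.

Hypotheses (hfaith : faithful M) (hprimeful : primeful M)
  (hX : exists P : M -> Prop, prime_submodule P).

Lemma colon_onto p : prime_ideal p -> exists2 P : M -> Prop, prime_submodule P & colon P = p.
Proof.
move=> hp; case: hprimeful => [M0 | onto].
  by exfalso; case: hX => P [[P0 _] [[m Pm] _]]; apply: Pm; rewrite (M0 m).
have [|P [hP Pp]] := onto p hp.
  by move=> r /hfaith ->; case: hp => [[]].
by exists P => //; apply/funext => r; apply/propext; exact: Pp.
Qed.

Lemma Supp_Xbasic f p : Supp (@Xbasic R M f) p <-> prime_ideal p /\ ~ p f.
Proof.
split=> [[P [/Xbasic_colon [hP Pf] ->]] | [hp pf]]; first by split=> //; exact: colon_prime_ideal.
by have [P hP Pp] := colon_onto hp; exists P; split=> //; apply/Xbasic_colon; rewrite Pp.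
Qed.

Section Sections.
Variables (N : lmodType R) (f : R).
Implicit Types (gamma : (R -> Prop) -> N * R) (z : N * R).

Lemma section_fraction_family gamma : is_section (@Xbasic R M f) gamma -> fraction_family f gamma.
Proof. by move=> [den _] q hq qf; apply: den; apply/Supp_Xbasic. Qed.

Lemma section_local_fraction gamma : is_section (@Xbasic R M f) gamma ->
  forall q, prime_ideal q -> ~ q f -> exists2 t, local_fraction f gamma t & ~ q t.2.
Proof.
move=> [_ loc] q hq qf; have [Q hQ Qq] := colon_onto hq; subst q.
have [W [Wopen [WQ [WX [s [m Wsm]]]]]] := loc Q (proj2 (Xbasic_colon f Q) (conj hQ qf)).
have [h Qh hW] := zopen_basic_nbhd Wopen WQ.
have Qhs : ~ colon Q (h * s).
  exact: prime_ideal_nmul (colon_prime_ideal hQ) Qh (proj1 (Wsm Q WQ)).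
exists (h *: m, h * s) => // q' hq' /= qhs; have [P hP Pq'] := colon_onto hq'; subst q'.
have WP : W P by apply: hW => //; exact: ideal_nmull (proj1 hq') qhs.
have [_ Pf] := proj1 (Xbasic_colon f P) (WX P WP).
have [Ps eq_sm] := Wsm P WP; split=> //.
apply: (loc_eq_trans (y := (m, s)) (mul_closed_compl hq') Ps eq_sm).
by apply: loc_eq_expand; case: (mul_closed_compl hq').
Qed.

Lemma glue_section gamma : is_section (@Xbasic R M f) gamma ->
  global_fraction f gamma (glue f gamma).
Proof.
move=> sec; have [z gz] := exists_global_fraction (section_fraction_family sec)
  (section_local_fraction sec).
exact: glueP gz.
Qed.

Lemma const_section z : powers f z.2 -> is_section (@Xbasic R M f) (fun _ => z).
Proof.
move=> fz; split=> [p /Supp_Xbasic [hp pf] | Q XQ]; first exact: powers_sub_compl hp pf _ fz.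
exists (@Xbasic R M f); split; first exact: zopen_Xbasic.
do 2!split=> //; exists z.2, z.1 => P /Xbasic_colon [hP Pf]; have hp := colon_prime_ideal hP.
split; first exact: powers_sub_compl hp Pf _ fz.
by case: z fz => m s _; apply: loc_eq_refl; case: (mul_closed_compl hp).
Qed.

End Sections.
End Spectrum.

Theorem proposition3p20 (R : comPzRingType) (M N : lmodType R)
  (hfaith : faithful M) (hprimeful : primeful M)
  (hX : exists P : M -> Prop, prime_submodule P) (f : R) :
  smod_iso (sections_mod N (@Xbasic R M f)) (Nf N f).
Proof.
have den := section_fraction_family hfaith hprimeful hX (f := f) (N := N).
have glued := glue_section hfaith hprimeful hX (f := f) (N := N).
exists (glue f); split; [|split; [|split; [|split; [|split]]]].
- by move=> x /glued [].
- move=> x y hx hy /= xy; apply: glue_eq (den x hx) _.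
  apply: global_fraction_eqv (den y hy) _ (glued y hy) => q hq qf.
  by apply: xy; apply/(Supp_Xbasic hfaith hprimeful hX).
- move=> x y hx hy; apply: glue_eq (global_fraction_add (glued x hx) (glued y hy)).
  by move=> q hq qf; exact: prime_ideal_nmul hq (den x hx q hq qf) (den y hy q hq qf).
- move=> r x hx; apply: glue_eq (global_fraction_scale r (glued x hx)) => q hq qf.
  exact: den x hx q hq qf.
- move=> x y hx hy xy p /(Supp_Xbasic hfaith hprimeful hX) [hp pf].
  exact: global_fraction_loc_eq (glued x hx) (glued y hy) xy p hp pf.
- move=> z fz; exists (fun _ => z); split; first exact: const_section.
  apply: glue_eq (global_fraction_const fz) => q hq qf.
  exact: powers_sub_compl hq qf _ fz.
Qed.
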